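(* Consider a liquid ($l$), its vapor ($v$) and a gas ($g$), each with extensive entropy $S_k:(\mathbb R^+)^3\to\mathbb R\cup\{-\infty\}$ of $(M_k,V_k,E_k)$ which is concave, positively homogeneous of degree 1, upper semi-continuous, has non-empty closed convex domain $C_k=\{S_k>-\infty\}$, and is $\mathcal C^2$ on $C_k$ with $\partial S_k/\partial E>0$. Let $s_k(\tau,e)=S_k(1,\tau,e)$ and, for $\tau,e>0$, mass fractions $\varphi_k$, volume fractions $\alpha_k$ and energy fractions $z_k$ in $[0,1]$, set $$\sigma(\tau,e,(\varphi_k),(\alpha_k),(z_k))=\sum_{k\in\{l,g,v\}}\varphi_k\, s_k\Big(\frac{\alpha_k}{\varphi_k}\tau,\frac{z_k}{\varphi_k}e\Big),$$ with the convention $\varphi_k s_k(a/\varphi_k,b/\varphi_k)=S_k(\varphi_k,a,b)$. Fix $\varphi_g\in[0,1]$. Without phase transition, with $\varphi_l$ also fixed and $\varphi_v=1-\varphi_l-\varphi_g\ge 0$, define $$s_{NPT}(\tau,e,\varphi_l,\varphi_g)=\max\{\sigma:\ \alpha_l+\alpha_v=1,\ \alpha_g=\alpha_v,\ z_l+z_g+z_v=1\},$$ the maximum being over $(\alpha_k,z_k)_k$. With phase transition, define $$s_{PT}(\tau,e,\varphi_g)=\max\{\sigma:\ \varphi_l+\varphi_v=1-\varphi_g,\ \alpha_l+\alpha_v=1,\ \alpha_g=\alpha_v,\ z_l+z_g+z_v=1\},$$ the maximum being over $(\varphi_l,\varphi_v,(\alpha_k),(z_k))$. Let $S_{NPT}(M,V,E,M_l,M_g)$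 be the maximum of $\sum_k S_k(M_k,V_k,E_k)$ over $W_k\in C_k$ with $M_v=M-M_l-M_g$, $E=E_l+E_g+E_v$, $V=V_l+V_v$, $V_g=V_v$, and $S_{PT}(M,V,E,M_g)$ the analogous maximum where additionally $M_l,M_v\ge0$ vary subject to $M_l+M_v=M-M_g$. Then these intensive functions are the equilibrium intensive entropies of the mixture, i.e. for $M>0$, $S_{NPT}(M,V,E,M_l,M_g)=M\,s_{NPT}(V/M,E/M,M_l/M,M_g/M)$ and $S_{PT}(M,V,E,M_g)=M\,s_{PT}(V/M,E/M,M_g/M)$; and in both cases the equilibrium intensive entropy is a concave function of its arguments.
   Context: $\varphi_k=M_k/M$, $\alpha_k=V_k/V$, $z_k=E_k/E$, $\tau=V/M$ (specific volume), $e=E/M$ (specific internal energy). The constraints $\alpha_l+\alpha_v=1$, $\alpha_g=\alpha_v$ express that vapor and gas are miscible while the liquid is immiscible with them. *)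

From HB Require Import structures.
From mathcomp Require Import all_boot all_order all_algebra.
From mathcomp Require Import all_classical all_reals all_analysis.
Set Implicit Arguments. Unset Strict Implicit. Unset Printing Implicit Defensive.
Import Order.TTheory GRing.Theory Num.Theory.
Import numFieldNormedType.Exports.
Local Open Scope classical_set_scope.
Local Open Scope ring_scope.

Section Defs.
Variable R : realType.

Definition state := (R * R * R)%type.

Definition st_M (W : state) : R := W.1.1.
Definition st_V (W : state) : R := W.1.2.
Definition st_E (W : state) : R := W.2.

Definition nonneg_state (W : state) : Prop :=
  0 <= st_M W /\ 0 <= st_V W /\ 0 <= st_E W.

Definition dom_S (S : state -> \bar R) : set state :=
  [set W | nonneg_state W /\ S W != -oo%E].

Definition comb (t : R) (W1 W2 : state) : state :=
  ((t * st_M W1 + (1 - t) * st_M W2, t * st_V W1 + (1 - t) * st_V W2),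
    t * st_E W1 + (1 - t) * st_E W2).

Definition concave_S (S : state -> \bar R) : Prop :=
  forall W1 W2 t, nonneg_state W1 -> nonneg_state W2 -> 0 < t < 1 ->
    (t%:E * S W1 + (1 - t)%:E * S W2 <= S (comb t W1 W2))%E.

Definition pos_homogeneous1 (S : state -> \bar R) : Prop :=
  forall (l : R) W, 0 < l -> nonneg_state W ->
    S ((l * st_M W, l * st_V W), l * st_E W) = (l%:E * S W)%E.

Definition usc_S (S : state -> \bar R) : Prop :=
  forall W (r : R), nonneg_state W -> (S W < r%:E)%E ->
    exists2 d : R, 0 < d & forall W', nonneg_state W' ->
      `|st_M W' - st_M W| < d -> `|st_V W' - st_V W| < d ->
      `|st_E W' - st_E W| < d -> (S W' < r%:E)%E.

Definition convex_set3 (A : set state) : Prop :=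
  forall W1 W2 t, A W1 -> A W2 -> 0 <= t <= 1 -> A (comb t W1 W2).

Definition basis3 (i : 'I_3) : state :=
  ((if val i == 0%N then 1 else 0, if val i == 1%N then 1 else 0),
    if val i == 2%N then 1 else 0).

Definition C2_on (A : set state) (f : state -> R) : Prop :=
  forall i j : 'I_3,
    (forall W, A W -> derivable f W (basis3 i)) /\
    {within A, continuous (fun W => 'D_(basis3 i) f W)} /\
    (forall W, A W -> derivable (fun W' => 'D_(basis3 i) f W') W (basis3 j)) /\
    {within A, continuous (fun W => 'D_(basis3 j) (fun W' => 'D_(basis3 i) f W') W)}.

Definition entropy_hyp (S : state -> \bar R) : Prop :=
  [/\ concave_S S,
      pos_homogeneous1 S,
      usc_S S,
      (dom_S S !=set0 /\ closed (dom_S S) /\ convex_set3 (dom_S S)) &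
      (C2_on (interior (dom_S S)) (fun W => fine (S W)) /\
      (forall W, interior (dom_S S) W ->
         0 < 'D_(basis3 (@Ordinal 3 2 isT)) (fun W' => fine (S W')) W))].

Definition s_int (S : state -> \bar R) (tau e : R) : \bar R := S ((1, tau), e).

(* phi_k s_k(alpha_k tau/phi_k, z_k e/phi_k), with the convention
   phi s(a/phi, b/phi) = S(phi, a, b) (used at phi = 0) *)
Definition term (S : state -> \bar R) (tau e phi a z : R) : \bar R :=
  if phi == 0 then S ((phi, a * tau), z * e)
  else (phi%:E * s_int S (a / phi * tau) (z / phi * e))%E.

Definition sigma (Sl Sg Sv : state -> \bar R) (tau e : R)
  (phil phig phiv al ag av zl zg zv : R) : \bar R :=
  (term Sl tau e phil al zl + term Sg tau e phig ag zg + term Sv tau e phiv av zv)%E.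

Definition unit01 (x : R) : Prop := 0 <= x <= 1.

Definition s_NPT (Sl Sg Sv : state -> \bar R) (tau e phil phig : R) : \bar R :=
  ereal_sup [set x | exists al ag av zl zg zv : R,
    [/\ unit01 al, unit01 ag & unit01 av] /\ [/\ unit01 zl, unit01 zg & unit01 zv] /\
    [/\ al + av = 1, ag = av & zl + zg + zv = 1] /\
    x = sigma Sl Sg Sv tau e phil phig (1 - phil - phig) al ag av zl zg zv].

Definition s_PT (Sl Sg Sv : state -> \bar R) (tau e phig : R) : \bar R :=
  ereal_sup [set x | exists phil phiv al ag av zl zg zv : R,
    [/\ unit01 phil, unit01 phiv & phil + phiv = 1 - phig] /\
    [/\ unit01 al, unit01 ag & unit01 av] /\ [/\ unit01 zl, unit01 zg & unit01 zv] /\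
    [/\ al + av = 1, ag = av & zl + zg + zv = 1] /\
    x = sigma Sl Sg Sv tau e phil phig phiv al ag av zl zg zv].

Definition S_NPT (Sl Sg Sv : state -> \bar R) (M V E Ml Mg : R) : \bar R :=
  ereal_sup [set x | exists Vl Vg Vv El Eg Ev : R,
    ([/\ dom_S Sl ((Ml, Vl), El), dom_S Sg ((Mg, Vg), Eg) &
        dom_S Sv ((M - Ml - Mg, Vv), Ev)] /\
        [/\ E = El + Eg + Ev, V = Vl + Vv & Vg = Vv]) /\
    x = (Sl ((Ml, Vl), El) + Sg ((Mg, Vg), Eg) + Sv (((M - Ml - Mg)%R, Vv), Ev))%E].

Definition S_PT (Sl Sg Sv : state -> \bar R) (M V E Mg : R) : \bar R :=
  ereal_sup [set x | exists Ml Mv Vl Vg Vv El Eg Ev : R,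
    [/\ 0 <= Ml, 0 <= Mv & Ml + Mv = M - Mg] /\
    ([/\ dom_S Sl ((Ml, Vl), El), dom_S Sg ((Mg, Vg), Eg) &
        dom_S Sv ((Mv, Vv), Ev)] /\
        [/\ E = El + Eg + Ev, V = Vl + Vv & Vg = Vv]) /\
    x = (Sl ((Ml, Vl), El) + Sg ((Mg, Vg), Eg) + Sv ((Mv, Vv), Ev))%E].

Definition dom_NPT (tau e phil phig : R) : Prop :=
  [/\ 0 < tau, 0 < e, 0 <= phil, 0 <= phig & phil + phig <= 1].

Definition dom_PT (tau e phig : R) : Prop :=
  [/\ 0 < tau, 0 < e & 0 <= phig <= 1].

Definition cmb (t x y : R) : R := t * x + (1 - t) * y.

Definition concave_NPT (f : R -> R -> R -> R -> \bar R) : Prop :=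
  forall t a1 b1 c1 d1 a2 b2 c2 d2, 0 < t < 1 ->
    dom_NPT a1 b1 c1 d1 -> dom_NPT a2 b2 c2 d2 ->
    (t%:E * f a1 b1 c1 d1 + (1 - t)%:E * f a2 b2 c2 d2
       <= f (cmb t a1 a2) (cmb t b1 b2) (cmb t c1 c2) (cmb t d1 d2))%E.

Definition concave_PT (f : R -> R -> R -> \bar R) : Prop :=
  forall t a1 b1 d1 a2 b2 d2, 0 < t < 1 ->
    dom_PT a1 b1 d1 -> dom_PT a2 b2 d2 ->
    (t%:E * f a1 b1 d1 + (1 - t)%:E * f a2 b2 d2
       <= f (cmb t a1 a2) (cmb t b1 b2) (cmb t d1 d2))%E.

End Defs.

(* By positive homogeneity, phi_k s_k(alpha_k tau / phi_k, z_k e / phi_k) equals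
   S_k(phi_k, alpha_k tau, z_k e), also at phi_k = 0 by the convention built into
   [term]. Scaling by M thus turns the intensive maximisation into the extensive one
   with W_k = M (phi_k, alpha_k tau, z_k e), whence S_NPT = M s_NPT. The extensive
   problem maximises a sum of concave functions of states subject to linear
   constraints in (M, V, E, M_l, M_g), so S_NPT is jointly concave and so is its
   restriction s_NPT = S_NPT(1, .). With phase transition, S_PT and s_PT are the
   suprema over the liquid mass of S_NPT and s_NPT: this gives S_PT = M s_PT, and a
   supremum of a jointly concave function over a convex range is concave. *)

From HB Require Import structures.
From mathcomp Require Import all_boot all_order all_algebra.
From mathcomp Require Import all_classical all_reals all_analysis.
From mathcomp Require Import ring lra.
Import Order.TTheory GRing.Theory Num.Theory.
Local Open Scope ring_scope.

Section ereal_sup_lemmas.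
Context {R : realType}.
Local Open Scope ereal_scope.
Local Open Scope classical_set_scope.
Implicit Types (x y z : \bar R) (A : set (\bar R)).

(* No definedness side condition is needed: [+oo + -oo = -oo] on both sides. *)
Lemma pmuleDr (r : R) x y : (0 < r)%R -> r%:E * (x + y) = r%:E * x + r%:E * y.
Proof.
move=> r0; have [xy|] := boolP (x +? y); first exact: muleDr.
by case: x y => [x||] [y||] //= _; rewrite ?(gt0_muley, gt0_muleNy).
Qed.

Lemma adde3_le_neqNy x y z (u : \bar R) :
  (x != -oo -> y != -oo -> z != -oo -> x + y + z <= u) -> x + y + z <= u.
Proof.
have [->|xN] := eqVneq x -oo; first by rewrite !addNye leNye.
have [->|yN] := eqVneq y -oo; first by rewrite addeNy addNye leNye.
have [->|zN] := eqVneq z -oo; first by rewrite addeNy leNye.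
by apply.
Qed.

Lemma ereal_sup_addr_le A c u :
  (forall y, A y -> y + c <= u) -> ereal_sup A + c <= u.
Proof.
case: c => [r||] Au; last by rewrite addeNy leNye.
- by rewrite -leeBrDr //; apply/ereal_supP => y Ay; rewrite leeBrDr // Au.
- have [->|] := eqVneq (ereal_sup A) -oo; first by rewrite addNye leNye.
  rewrite -ltNye => /ereal_sup_gt[y Ay yN].
  have := Au y Ay; rewrite addey ?leye_eq; last by rewrite gt_eqF.
  by move=> /eqP ->; rewrite leey.
Qed.

Lemma le_ereal_sup_comb (t : R) A1 A2 u : (0 < t < 1)%R ->
  (forall x1 x2, A1 x1 -> A2 x2 -> t%:E * x1 + (1 - t)%:E * x2 <= u) ->
  t%:E * ereal_sup A1 + (1 - t)%:E * ereal_sup A2 <= u.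
Proof.
move=> /andP[t0 t1] Au; have t1' : (0 < 1 - t)%R by lra.
rewrite -ereal_sup_pZl //; apply: ereal_sup_addr_le => _ [x1 A1x1 <-].
rewrite addeC -ereal_sup_pZl //; apply: ereal_sup_addr_le => _ [x2 A2x2 <-].
by rewrite addeC Au.
Qed.

Lemma ereal_sup_bigcup T (I : set T) (B : T -> set (\bar R)) :
  ereal_sup (\bigcup_(i in I) B i) = ereal_sup [set ereal_sup (B i) | i in I].
Proof.
apply/le_anti/andP; split; apply/ereal_supP.
- move=> y [i Ii Biy]; apply: le_ereal_sup_tmp.
  by exists (ereal_sup (B i)); [exists i | exact: ereal_sup_ubound].
- by move=> _ [i Ii <-]; apply: ereal_sup_le => y Biy; exists i.
Qed.

Lemma leeD3_comb (t : R) (x1 y1 z1 x2 y2 z2 x y z : \bar R) : (0 < t < 1)%R ->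
  t%:E * x1 + (1 - t)%:E * x2 <= x ->
  t%:E * y1 + (1 - t)%:E * y2 <= y ->
  t%:E * z1 + (1 - t)%:E * z2 <= z ->
  t%:E * (x1 + y1 + z1) + (1 - t)%:E * (x2 + y2 + z2) <= x + y + z.
Proof.
move=> /andP[t0 t1] hx hy hz; have t1' : (0 < 1 - t)%R by lra.
rewrite !pmuleDr // addeACA (addeACA (t%:E * x1)).
by apply: leeD => //; apply: leeD.
Qed.

End ereal_sup_lemmas.

Lemma unit01_div (R : realType) (x s : R) : 0 <= x <= s -> 0 < s -> unit01 (x / s).
Proof.
move=> /andP[x0 xs] s0; apply/andP; split; first exact: divr_ge0 x0 (ltW s0).
by rewrite ler_pdivrMr // mul1r.
Qed.

Lemma dom_NPT_cmb (R : realType) (t a1 b1 c1 d1 a2 b2 c2 d2 : R) : 0 < t < 1 ->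
  dom_NPT a1 b1 c1 d1 -> dom_NPT a2 b2 c2 d2 ->
  dom_NPT (cmb t a1 a2) (cmb t b1 b2) (cmb t c1 c2) (cmb t d1 d2).
Proof. by move=> /andP[t0 t1] [? ? ? ? ?] [? ? ? ? ?]; rewrite /cmb; split; nra. Qed.

Section term.
Context {R : realType}.
Variable S : state R -> \bar R.
Hypothesis S_hom : pos_homogeneous1 S.

Lemma term_scale (M tau e phi a z : R) :
  0 < M -> 0 <= phi -> 0 <= a * tau -> 0 <= z * e ->
  (M%:E * term S tau e phi a z)%E = S ((M * phi, M * (a * tau)), M * (z * e)).
Proof.
move=> M0 phi0 at0 ze0; rewrite (S_hom M ((phi, a * tau), z * e)) //.
congr (_ * _)%E; rewrite /term; case: eqP => // /eqP phiN0.
have phi_gt0 : 0 < phi by rewrite lt_neqAle eq_sym phiN0.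
rewrite /s_int -S_hom //=; last first.
  by split => //=; split; rewrite /st_V /st_E /= -mulrAC divr_ge0 // ltW.
by congr (S ((_, _), _)); rewrite /st_M /st_V /st_E /=; field.
Qed.

End term.

Section mixture.
Context {R : realType}.
Local Open Scope classical_set_scope.
Variables Sl Sg Sv : state R -> \bar R.
Hypotheses (Sl_hom : pos_homogeneous1 Sl) (Sg_hom : pos_homogeneous1 Sg)
  (Sv_hom : pos_homogeneous1 Sv).

Lemma scale_sigma (M tau e phil phig phiv al av zl zg zv : R) :
  0 < M -> 0 <= tau -> 0 <= e -> 0 <= phil -> 0 <= phig -> 0 <= phiv ->
  0 <= al -> 0 <= av -> 0 <= zl -> 0 <= zg -> 0 <= zv ->
  (M%:E * sigma Sl Sg Sv tau e phil phig phiv al av av zl zg zv)%E =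
  (Sl ((M * phil, M * (al * tau)), M * (zl * e))%R
   + Sg ((M * phig, M * (av * tau)), M * (zg * e))%R
   + Sv ((M * phiv, M * (av * tau)), M * (zv * e))%R)%E.
Proof. by move=> M0 *; rewrite /sigma !pmuleDr // !term_scale ?mulr_ge0. Qed.

Lemma S_NPT_le_s_NPT (M V E Ml Mg : R) :
  0 < M -> 0 < V -> 0 < E -> 0 <= Ml -> 0 <= Mg -> Ml + Mg <= M ->
  (S_NPT Sl Sg Sv M V E Ml Mg
   <= M%:E * s_NPT Sl Sg Sv (V / M) (E / M) (Ml / M) (Mg / M))%E.
Proof.
move=> M0 V0 E0 Ml0 Mg0 MlgM.
apply/ereal_supP => _ [Vl [Vg [Vv [El [Eg [Ev [[[dl dg dv] [hE hV ->]] ->]]]]]]].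
move: dl dg dv; rewrite /dom_S /nonneg_state /st_V /st_E /=.
move=> [[_ [Vl0 El0]] _] [[_ [Vg0 Eg0]] _] [[_ [Vv0 Ev0]] _].
rewrite -ereal_sup_pZl //; apply: ereal_sup_ubound.
exists (sigma Sl Sg Sv (V / M) (E / M) (Ml / M) (Mg / M) (1 - Ml / M - Mg / M)
          (Vl / V) (Vv / V) (Vv / V) (El / E) (Eg / E) (Ev / E)).
  exists (Vl / V), (Vv / V), (Vv / V), (El / E), (Eg / E), (Ev / E).
  split; [|split; [|split; [|by []]]].
  - by split; apply: unit01_div => //; apply/andP; split => //; lra.
  - by split; apply: unit01_div => //; apply/andP; split => //; lra.
  - by split; rewrite // -?mulrDl -?hV -?hE divff // lt0r_neq0.
have MvE : M * (1 - Ml / M - Mg / M) = M - Ml - Mg by field; rewrite lt0r_neq0.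
have phiv0 : 0 <= 1 - Ml / M - Mg / M by rewrite -(pmulr_rge0 _ M0) MvE; lra.
rewrite scale_sigma ?divr_ge0 ?(ltW M0) ?(ltW V0) ?(ltW E0) //.
by congr (Sl ((_, _), _) + Sg ((_, _), _) + Sv ((_, _), _))%E; field;
  rewrite ?lt0r_neq0.
Qed.

Lemma s_NPT_le_S_NPT (M V E Ml Mg : R) :
  0 < M -> 0 < V -> 0 < E -> 0 <= Ml -> 0 <= Mg -> Ml + Mg <= M ->
  (M%:E * s_NPT Sl Sg Sv (V / M) (E / M) (Ml / M) (Mg / M)
   <= S_NPT Sl Sg Sv M V E Ml Mg)%E.
Proof.
move=> M0 V0 E0 Ml0 Mg0 MlgM; rewrite -ereal_sup_pZl //.
apply/ereal_supP => _ [_ [al [_ [av [zl [zg [zv [[ual _ uav] [[uzl uzg uzv]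
  [[hal -> hz] ->]]]]]]]]] <-].
move: ual uav uzl uzg uzv => /andP[al0 _] /andP[av0 _] /andP[zl0 _] /andP[zg0 _] /andP[zv0 _].
have massE x : M * (x / M) = x by rewrite mulrC divfK // lt0r_neq0.
have scaleE x y : M * (x * (y / M)) = x * y by rewrite mulrCA massE.
have MvE : M * (1 - Ml / M - Mg / M) = M - Ml - Mg by field; rewrite lt0r_neq0.
have phiv0 : 0 <= 1 - Ml / M - Mg / M by rewrite -(pmulr_rge0 _ M0) MvE; lra.
rewrite scale_sigma ?divr_ge0 ?(ltW M0) ?(ltW V0) ?(ltW E0) // !massE !scaleE MvE.
apply: adde3_le_neqNy => lN gN vN; apply: ereal_sup_ubound.
exists (al * V), (av * V), (av * V), (zl * E), (zg * E), (zv * E).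
split=> //; split.
- rewrite /dom_S /nonneg_state /st_M /st_V /st_E /=.
  by rewrite !mulr_ge0 ?(ltW V0) ?(ltW E0) //; do !split => //; lra.
- by split; rewrite // -!mulrDl ?hz ?hal mul1r.
Qed.

Lemma S_NPT_s_NPT (M V E Ml Mg : R) :
  0 < M -> 0 < V -> 0 < E -> 0 <= Ml -> 0 <= Mg -> Ml + Mg <= M ->
  S_NPT Sl Sg Sv M V E Ml Mg
  = (M%:E * s_NPT Sl Sg Sv (V / M) (E / M) (Ml / M) (Mg / M))%E.
Proof.
by move=> *; apply/le_anti; rewrite S_NPT_le_s_NPT ?s_NPT_le_S_NPT.
Qed.

Lemma s_NPT_S_NPT1 (tau e phil phig : R) : dom_NPT tau e phil phig ->
  s_NPT Sl Sg Sv tau e phil phig = S_NPT Sl Sg Sv 1 tau e phil phig.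
Proof. by case=> *; rewrite S_NPT_s_NPT ?ltr01 // !divr1 mul1e. Qed.

Lemma S_PT_sup (M V E Mg : R) : S_PT Sl Sg Sv M V E Mg
  = ereal_sup [set S_NPT Sl Sg Sv M V E Ml Mg
                | Ml in [set Ml | 0 <= Ml /\ Ml + Mg <= M]].
Proof.
rewrite -ereal_sup_bigcup; congr ereal_sup; apply/seteqP; split.
- move=> _ [Ml [Mv [Vl [Vg [Vv [El [Eg [Ev [[Ml0 Mv0 hM] [dom ->]]]]]]]]]].
  have MvE : Mv = M - Ml - Mg by lra.
  by subst Mv; exists Ml; [split; lra | exists Vl, Vg, Vv, El, Eg, Ev].
- move=> _ [Ml [Ml0 MlM] [Vl [Vg [Vv [El [Eg [Ev [dom ->]]]]]]]].
  by exists Ml, (M - Ml - Mg), Vl, Vg, Vv, El, Eg, Ev; split=> //; split=> //; lra.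
Qed.

Lemma s_PT_sup (tau e phig : R) : 0 <= phig -> s_PT Sl Sg Sv tau e phig
  = ereal_sup [set s_NPT Sl Sg Sv tau e phil phig
                | phil in [set phil | 0 <= phil /\ phil + phig <= 1]].
Proof.
move=> phig0; rewrite -ereal_sup_bigcup; congr ereal_sup; apply/seteqP; split.
- move=> _ [phil [phiv [al [ag [av [zl [zg [zv [[/andP[phil0 _] /andP[phiv0 _] hphi]
    [ua [uz [hs ->]]]]]]]]]]]].
  have phivE : phiv = 1 - phil - phig by lra.
  by subst phiv; exists phil; [split; lra | exists al, ag, av, zl, zg, zv].
- move=> _ [phil [phil0 phil1] [al [ag [av [zl [zg [zv [ua [uz [hs ->]]]]]]]]]].
  exists phil, (1 - phil - phig), al, ag, av, zl, zg, zv.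
  split=> //; split; last by ring.
  all: by apply/andP; split; lra.
Qed.

Lemma S_PT_s_PT (M V E Mg : R) : 0 < M -> 0 < V -> 0 < E -> 0 <= Mg <= M ->
  S_PT Sl Sg Sv M V E Mg = (M%:E * s_PT Sl Sg Sv (V / M) (E / M) (Mg / M))%E.
Proof.
move=> M0 V0 E0 /andP[Mg0 MgM].
have massE x : M * (x / M) = x by rewrite mulrC divfK // lt0r_neq0.
rewrite S_PT_sup s_PT_sup ?divr_ge0 ?(ltW M0) // -ereal_sup_pZl // image_comp.
congr ereal_sup; apply/seteqP; split=> _ [Ml [Ml0 MlM] <-] /=.
- rewrite S_NPT_s_NPT //; exists (Ml / M) => //.
  by rewrite divr_ge0 ?(ltW M0) // -mulrDl ler_pdivrMr // mul1r.
- have MMlM : M * Ml + Mg <= M by have := massE Mg; nra.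
  exists (M * Ml); first by rewrite mulr_ge0 ?(ltW M0).
  by rewrite S_NPT_s_NPT ?mulr_ge0 ?(ltW M0) // (mulrC M) mulfK ?lt0r_neq0.
Qed.

Section concavity.
Hypotheses (Sl_conc : concave_S Sl) (Sg_conc : concave_S Sg) (Sv_conc : concave_S Sv).
Hypotheses (Sl_dom : convex_set3 (dom_S Sl)) (Sg_dom : convex_set3 (dom_S Sg))
  (Sv_dom : convex_set3 (dom_S Sv)).

Lemma S_NPT_concave (t M1 V1 E1 Ml1 Mg1 M2 V2 E2 Ml2 Mg2 : R) : 0 < t < 1 ->
  (t%:E * S_NPT Sl Sg Sv M1 V1 E1 Ml1 Mg1
   + (1 - t)%:E * S_NPT Sl Sg Sv M2 V2 E2 Ml2 Mg2
   <= S_NPT Sl Sg Sv (cmb t M1 M2) (cmb t V1 V2) (cmb t E1 E2) (cmb t Ml1 Ml2)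
        (cmb t Mg1 Mg2))%E.
Proof.
move=> t01; have t01' : 0 <= t <= 1 by case/andP: t01 => *; apply/andP; split; lra.
apply: le_ereal_sup_comb => // _ _
  [Vl1 [Vg1 [Vv1 [El1 [Eg1 [Ev1 [[[dl1 dg1 dv1] [-> -> hVg1]] ->]]]]]]]
  [Vl2 [Vg2 [Vv2 [El2 [Eg2 [Ev2 [[[dl2 dg2 dv2] [-> -> hVg2]] ->]]]]]]].
rewrite /S_NPT; have -> : cmb t M1 M2 - cmb t Ml1 Ml2 - cmb t Mg1 Mg2
                          = cmb t (M1 - Ml1 - Mg1) (M2 - Ml2 - Mg2) by rewrite /cmb; ring.
apply: le_ereal_sup_tmp.
exists (Sl ((cmb t Ml1 Ml2, cmb t Vl1 Vl2), cmb t El1 El2)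
        + Sg ((cmb t Mg1 Mg2, cmb t Vg1 Vg2), cmb t Eg1 Eg2)
        + Sv ((cmb t (M1 - Ml1 - Mg1) (M2 - Ml2 - Mg2), cmb t Vv1 Vv2), cmb t Ev1 Ev2))%E.
  exists (cmb t Vl1 Vl2), (cmb t Vg1 Vg2), (cmb t Vv1 Vv2), (cmb t El1 El2),
    (cmb t Eg1 Eg2), (cmb t Ev1 Ev2).
  split=> //; split; last by split; rewrite /cmb ?hVg1 ?hVg2; ring.
  split; [exact: Sl_dom dl1 dl2 t01' | exact: Sg_dom dg1 dg2 t01' |
          exact: Sv_dom dv1 dv2 t01'].
apply: leeD3_comb => //.
- exact: Sl_conc dl1.1 dl2.1 t01.
- exact: Sg_conc dg1.1 dg2.1 t01.
- exact: Sv_conc dv1.1 dv2.1 t01.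
Qed.

Lemma s_NPT_concave : concave_NPT (s_NPT Sl Sg Sv).
Proof.
move=> t a1 b1 c1 d1 a2 b2 c2 d2 t01 dom1 dom2.
rewrite !s_NPT_S_NPT1 //; last exact: dom_NPT_cmb.
have cmb11 : cmb t 1 1 = 1 by rewrite /cmb; ring.
by move: (S_NPT_concave t 1 a1 b1 c1 d1 1 a2 b2 c2 d2 t01); rewrite cmb11.
Qed.

Lemma s_PT_concave : concave_PT (s_PT Sl Sg Sv).
Proof.
move=> t a1 b1 d1 a2 b2 d2 t01 [a10 b10 /andP[d10 d11]] [a20 b20 /andP[d20 d21]].
have /andP[t0 t1] := t01.
rewrite !s_PT_sup //; last by rewrite /cmb; nra.
apply: le_ereal_sup_comb => // _ _ [c1 [c10 c11] <-] [c2 [c20 c21] <-].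
apply: le_ereal_sup_tmp.
exists (s_NPT Sl Sg Sv (cmb t a1 a2) (cmb t b1 b2) (cmb t c1 c2) (cmb t d1 d2)).
  by exists (cmb t c1 c2) => //; rewrite /cmb; split; nra.
by apply: s_NPT_concave.
Qed.

End concavity.

End mixture.

Theorem proposition2p3 (R : realType) (Sl Sg Sv : state R -> \bar R) :
  entropy_hyp Sl -> entropy_hyp Sg -> entropy_hyp Sv ->
  [/\ (forall M V E Ml Mg : R, 0 < M -> 0 < V -> 0 < E ->
         0 <= Ml -> 0 <= Mg -> Ml + Mg <= M ->
         S_NPT Sl Sg Sv M V E Ml Mg
           = (M%:E * s_NPT Sl Sg Sv (V / M) (E / M) (Ml / M) (Mg / M))%E),
      (forall M V E Mg : R, 0 < M -> 0 < V -> 0 < E -> 0 <= Mg <= M ->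
         S_PT Sl Sg Sv M V E Mg
           = (M%:E * s_PT Sl Sg Sv (V / M) (E / M) (Mg / M))%E),
      concave_NPT (s_NPT Sl Sg Sv) &
      concave_PT (s_PT Sl Sg Sv)].
Proof.
move=> [Sl_conc Sl_hom _ [_ [_ Sl_dom]] _] [Sg_conc Sg_hom _ [_ [_ Sg_dom]] _]
  [Sv_conc Sv_hom _ [_ [_ Sv_dom]] _].
split.
- exact: S_NPT_s_NPT.
- exact: S_PT_s_PT.
- exact: s_NPT_concave.
- exact: s_PT_concave.
Qed.
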